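(* Let $H$ be a cocommutative Hopf algebra and $\mathcal{A}$ an $H$-bimodule algebra. Then the L-R-smash product $\mathcal{A}\natural H$ is isomorphic as an algebra to the smash product $\mathcal{A}\# H$, where $\mathcal{A}$ is regarded as a left $H$-module algebra via $h\rightarrow\varphi=h_1\cdot\varphi\cdot S(h_2)$.
   Context: Work over a field $k$, $H$ an ordinary Hopf algebra with antipode $S$, $\Delta(h)=h_1\otimes h_2$. An $H$-bimodule algebra is an associative unital algebra $\mathcal{A}$ which is an $H$-bimodule (actions $h\cdot\varphi$, $\varphi\cdot h$) with $h\cdot(\varphi\psi)=(h_1\cdot\varphi)(h_2\cdot\psi)$, $(\varphi\psi)\cdot h=(\varphi\cdot h_1)(\psi\cdot h_2)$, $h\cdot1=1\cdot h=\varepsilon(h)1$. The L-R-smash product $\mathcal{A}\natural H$ is $\mathcal{A}\otimes H$ with product $(\varphi\natural h)(\psi\natural h')=(\varphi\cdot h'_2)(h_1\cdot\psi)\natural h_2h'_1$ and unit $1\natural1$. For a left $H$-module algebra $\mathcal{A}$ with action $\rightarrow$, the smash product $\mathcal{A}\# H$ is $\mathcal{A}\otimes H$ with product $(\varphi\# h)(\varphi'\# h')=\varphi(h_1\rightarrow\varphi')\# h_2h'$. *)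

From HB Require Import structures.
From mathcomp Require Import all_boot all_order all_algebra.
Set Implicit Arguments. Unset Strict Implicit. Unset Printing Implicit Defensive.
Import GRing.Theory.
Local Open Scope ring_scope.

(* Tensor products V (x) W of K-vector spaces are represented by finite lists
   of pairs  [:: (v1,w1); ...; (vn,wn)]  standing for  sum_i v_i (x) w_i,
   two lists being identified (teq) iff every bilinear map into every
   K-vector space takes the same value on them; this is exactly equality
   in V (x) W (universal property of the tensor product).
   The coproduct is given in Sweedler form  Delta h = sum_{p in D h} p.1 (x) p.2. *)

Section Defs.
Variable K : fieldType.

Definition bilinear_map (V W U : lmodType K) (f : V -> W -> U) : Prop :=
  (forall (a : K) x x' y, f (a *: x + x') y = a *: f x y + f x' y) /\
  (forall (a : K) x y y', f x (a *: y + y') = a *: f x y + f x y').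

Definition trilinear_map (V1 V2 V3 U : lmodType K) (f : V1 -> V2 -> V3 -> U) : Prop :=
  (forall (a : K) x x' y z, f (a *: x + x') y z = a *: f x y z + f x' y z) /\
  (forall (a : K) x y y' z, f x (a *: y + y') z = a *: f x y z + f x y' z) /\
  (forall (a : K) x y z z', f x y (a *: z + z') = a *: f x y z + f x y z').

Definition tsum (V W : Type) (U : lmodType K) (f : V -> W -> U) (s : seq (V * W)) : U :=
  \sum_(p <- s) f p.1 p.2.

Definition teq (V W : lmodType K) (s t : seq (V * W)) : Prop :=
  forall (U : lmodType K) (f : V -> W -> U), bilinear_map f -> tsum f s = tsum f t.

Definition tscale (V W : lmodType K) (a : K) (s : seq (V * W)) : seq (V * W) :=
  [seq (a *: p.1, p.2) | p <- s].

Record hopf_algebra (H : algType K) (D : H -> seq (H * H)) (eps : H -> K) (S : H -> H)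
  : Prop := {
  hopf_D_linear : forall (a : K) h h', teq (D (a *: h + h')) (tscale a (D h) ++ D h');
  hopf_coassoc : forall (U : lmodType K) (g : H -> H -> H -> U), trilinear_map g ->
    forall h, \sum_(p <- D h) \sum_(q <- D p.1) g q.1 q.2 p.2
            = \sum_(p <- D h) \sum_(q <- D p.2) g p.1 q.1 q.2;
  hopf_eps_linear : forall (a : K) h h', eps (a *: h + h') = a * eps h + eps h';
  hopf_counit_l : forall h, \sum_(p <- D h) eps p.1 *: p.2 = h;
  hopf_counit_r : forall h, \sum_(p <- D h) eps p.2 *: p.1 = h;
  hopf_D_mul : forall g h, teq (D (g * h)) [seq (p.1 * q.1, p.2 * q.2) | p <- D g, q <- D h];
  hopf_D_one : teq (D 1) [:: (1, 1)];
  hopf_eps_mul : forall g h, eps (g * h) = eps g * eps h;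
  hopf_eps_one : eps 1 = 1;
  hopf_S_linear : forall (a : K) h h', S (a *: h + h') = a *: S h + S h';
  hopf_antipode_l : forall h, \sum_(p <- D h) S p.1 * p.2 = eps h *: 1;
  hopf_antipode_r : forall h, \sum_(p <- D h) p.1 * S p.2 = eps h *: 1
}.

Definition cocommutative (H : algType K) (D : H -> seq (H * H)) : Prop :=
  forall h, teq (D h) [seq (p.2, p.1) | p <- D h].

Record bimodule_algebra (H A : algType K) (D : H -> seq (H * H)) (eps : H -> K)
  (la : H -> A -> A) (ra : A -> H -> A) : Prop := {
  bma_la_bilinear : bilinear_map la;
  bma_ra_bilinear : bilinear_map ra;
  bma_la_mul : forall g h x, la (g * h) x = la g (la h x);
  bma_la_one : forall x, la 1 x = x;
  bma_ra_mul : forall x g h, ra x (g * h) = ra (ra x g) h;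
  bma_ra_one : forall x, ra x 1 = x;
  bma_lr : forall g x h, ra (la g x) h = la g (ra x h);
  bma_la_mulA : forall h x y, la h (x * y) = \sum_(p <- D h) la p.1 x * la p.2 y;
  bma_ra_mulA : forall x y h, ra (x * y) h = \sum_(p <- D h) ra x p.1 * ra y p.2;
  bma_la_1 : forall h, la h 1 = eps h *: 1;
  bma_ra_1 : forall h, ra 1 h = eps h *: 1
}.

(* L-R-smash product:
   (phi # h)(psi # h') = (phi . h'_2)(h_1 . psi) # h_2 h'_1, extended bilinearly *)
Definition lr_mul (H A : algType K) (D : H -> seq (H * H))
  (la : H -> A -> A) (ra : A -> H -> A) (s t : seq (A * H)) : seq (A * H) :=
  flatten [seq flatten [seq [seq (ra x.1 q.2 * la p.1 y.1, p.2 * q.1)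
                                | p <- D x.2, q <- D y.2] | y <- t] | x <- s].

Definition smash_act (H A : algType K) (D : H -> seq (H * H)) (S : H -> H)
  (la : H -> A -> A) (ra : A -> H -> A) (h : H) (x : A) : A :=
  \sum_(p <- D h) ra (la p.1 x) (S p.2).

(* smash product: (phi # h)(phi' # h') = phi (h_1 -> phi') # h_2 h' *)
Definition smash_mul (H A : algType K) (D : H -> seq (H * H))
  (act : H -> A -> A) (s t : seq (A * H)) : seq (A * H) :=
  flatten [seq flatten [seq [seq (x.1 * act p.1 y.1, p.2 * y.2) | p <- D x.2]
                         | y <- t] | x <- s].

Definition tensor_alg_iso (H A : algType K)
  (m1 m2 : seq (A * H) -> seq (A * H) -> seq (A * H)) : Prop :=
  exists F : seq (A * H) -> seq (A * H),
    (forall s t, teq s t -> teq (F s) (F t)) /\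
    (forall s t, teq (F (s ++ t)) (F s ++ F t)) /\
    (forall (a : K) s, teq (F (tscale a s)) (tscale a (F s))) /\
    (forall s t, teq (F (m1 s t)) (m2 (F s) (F t))) /\
    teq (F [:: (1, 1)]) [:: (1, 1)] /\
    (forall s t, teq (F s) (F t) -> teq s t) /\
    (forall t, exists s, teq (F s) t).

End Defs.

From mathcomp Require Import all_boot all_order all_algebra.
From mathcomp Require Import zify.
Set Implicit Arguments. Unset Strict Implicit. Unset Printing Implicit Defensive.
Import GRing.Theory.
Local Open Scope ring_scope.

(* The isomorphism is  phi (x) h |-> phi . S(h_1) (x) h_2,  with inverse
   phi (x) h |-> phi . h_1 (x) h_2;  the antipode axioms make them mutually
   inverse.  Multiplicativity is checked on the inverse: by the bimodule-algebra
   axioms, cocommutativity, the antipode and the counit, both the image of the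
   smash product (phi # h)(psi # h') and the L-R product of the images reduce to
   (phi . h_2 h'_1)((h_1 . psi) . h'_2) (x) h_3 h'_3.
   Tensors are compared through their values on an arbitrary bilinear map, and
   all Sweedler computations take place in iterated coproducts, where
   coassociativity re-brackets and cocommutativity swaps adjacent factors of a
   multilinear expression. *)

Section LinearMaps.
Variable K : fieldType.
Implicit Types V W U : lmodType K.

Lemma lin0 V U (L : V -> U) : linear L -> L 0 = 0.
Proof.
move=> hL; have := hL 1 0 0; rewrite !scale1r addr0 => h.
by apply: (@addrI _ (L 0)); rewrite addr0 -h.
Qed.

Lemma linD V U (L : V -> U) : linear L -> forall x y, L (x + y) = L x + L y.
Proof. by move=> hL x y; have := hL 1 x y; rewrite !scale1r. Qed.

Lemma linZ V U (L : V -> U) : linear L -> forall a x, L (a *: x) = a *: L x.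
Proof. by move=> hL a x; rewrite -(addr0 (a *: x)) hL lin0 // addr0. Qed.

Lemma lin_sum V U (L : V -> U) (I : Type) (s : seq I) (F : I -> V) :
  linear L -> L (\sum_(i <- s) F i) = \sum_(i <- s) L (F i).
Proof.
move=> hL; elim: s => [|x s IH]; first by rewrite !big_nil lin0.
by rewrite !big_cons linD // IH.
Qed.

Lemma linear_bigsum V U (I : eqType) (s : seq I) (L : I -> V -> U) :
  (forall i, i \in s -> linear (L i)) -> linear (fun x => \sum_(i <- s) L i x).
Proof.
move=> hL a x y; rewrite scaler_sumr -big_split; apply: eq_big_seq => i hi.
exact: hL.
Qed.

Lemma lin_bilinear_map V W U (f : V -> W -> U) :
  (forall y, linear (f^~ y)) -> (forall x, linear (f x)) -> bilinear_map f.
Proof. by move=> h1 h2; split=> a x x' y; [apply: (h1 y) | apply: (h2 x)]. Qed.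

Lemma lin_trilinear_map V1 V2 V3 U (g : V1 -> V2 -> V3 -> U) :
  (forall y z, linear (g^~ y ^~ z)) -> (forall x z, linear ((g x)^~ z)) ->
  (forall x y, linear (g x y)) -> trilinear_map g.
Proof.
move=> h1 h2 h3; split; [|split] => a x.
- by move=> x' y z; apply: (h1 y z).
- by move=> y y' z; apply: (h2 x z).
- by move=> y z z'; apply: (h3 x y).
Qed.

Lemma mulrZl (B : algType K) (k : K) (x y : B) : (k *: x) * y = k *: (x * y).
Proof. by rewrite scalerAl. Qed.
Lemma mulrZr (B : algType K) (k : K) (x y : B) : x * (k *: y) = k *: (x * y).
Proof. by rewrite scalerAr. Qed.
Lemma scalerM V (a b : K) (v : V) : (a * b) *: v = a *: (b *: v).
Proof. by rewrite scalerA. Qed.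

Section Bilinear.
Variables (V W U : lmodType K) (f : V -> W -> U).
Hypothesis hf : bilinear_map f.

Lemma bilinear_linl y : linear (f^~ y). Proof. by case: hf => h _ a x x'; apply: h. Qed.
Lemma bilinear_linr x : linear (f x). Proof. by case: hf => _ h a y y'; apply: h. Qed.

Lemma bilinDl x x' y : f (x + x') y = f x y + f x' y.
Proof. exact: linD (bilinear_linl y) x x'. Qed.
Lemma bilinZl a x y : f (a *: x) y = a *: f x y.
Proof. exact: linZ (bilinear_linl y) a x. Qed.
Lemma bilinDr x y y' : f x (y + y') = f x y + f x y'.
Proof. exact: linD (bilinear_linr x) y y'. Qed.
Lemma bilinZr a x y : f x (a *: y) = a *: f x y.
Proof. exact: linZ (bilinear_linr x) a y. Qed.

Lemma bilin_suml (I : Type) (s : seq I) (F : I -> V) y :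
  f (\sum_(i <- s) F i) y = \sum_(i <- s) f (F i) y.
Proof. exact: lin_sum s F (bilinear_linl y). Qed.
Lemma bilin_sumr (I : Type) (s : seq I) (F : I -> W) x :
  f x (\sum_(i <- s) F i) = \sum_(i <- s) f x (F i).
Proof. exact: lin_sum s F (bilinear_linr x). Qed.

End Bilinear.
End LinearMaps.

Section Sweedler.
Variables (K : fieldType) (H : lmodType K) (D : H -> seq (H * H)).
Hypothesis D_linear : forall (a : K) h h', teq (D (a *: h + h')) (tscale a (D h) ++ D h').
Hypothesis D_coassoc : forall (U : lmodType K) (g : H -> H -> H -> U), trilinear_map g ->
  forall h, \sum_(p <- D h) \sum_(q <- D p.1) g q.1 q.2 p.2
          = \sum_(p <- D h) \sum_(q <- D p.2) g p.1 q.1 q.2.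

Lemma coprod_linear (U : lmodType K) (B : H -> H -> U) : bilinear_map B ->
  linear (fun h => \sum_(p <- D h) B p.1 p.2).
Proof.
move=> hb a h h'; have := D_linear a h h' hb; rewrite /tsum => ->.
rewrite big_cat /= big_map scaler_sumr; congr (_ + _); apply: eq_bigr => p _ /=.
by rewrite (bilinZl hb).
Qed.

Fixpoint coprod_iter (n : nat) (h : H) : seq (seq H) :=
  if n is n'.+1 then flatten [seq [seq p.1 :: l | l <- coprod_iter n' p.2] | p <- D h]
  else [:: [:: h]].

Definition sweedler (U : lmodType K) n h (g : seq H -> U) :=
  \sum_(l <- coprod_iter n h) g l.

(* Linearity in each entry of lists of length [n.+1], the lists summed over
   by [sweedler n]. *)
Definition multilinear (U : lmodType K) n (g : seq H -> U) :=
  forall pre post, (size pre + size post)%N = n -> linear (fun x => g (pre ++ x :: post)).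

Variable U : lmodType K.
Implicit Types g : seq H -> U.

Lemma sweedler0 h g : sweedler 0 h g = g [:: h].
Proof. by rewrite /sweedler /= big_seq1. Qed.

Lemma sweedlerS n h g :
  sweedler n.+1 h g = \sum_(p <- D h) sweedler n p.2 (fun l => g (p.1 :: l)).
Proof.
rewrite /sweedler /= big_flatten /= big_map; apply: eq_bigr => p _.
by rewrite big_map.
Qed.

Lemma sweedler1 h g : sweedler 1 h g = \sum_(p <- D h) g [:: p.1; p.2].
Proof. by rewrite sweedlerS; apply: eq_bigr => p _; rewrite sweedler0. Qed.

Lemma sweedler2 h g :
  sweedler 2 h g = \sum_(p <- D h) \sum_(q <- D p.2) g [:: p.1; q.1; q.2].
Proof. by rewrite sweedlerS; apply: eq_bigr => p _; rewrite sweedler1. Qed.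

Lemma size_coprod_iter n h l : l \in coprod_iter n h -> size l = n.+1.
Proof.
elim: n h l => [|n IH] h l /=; first by rewrite inE => /eqP ->.
case/flattenP=> s /mapP [p _ ->] /mapP [l' hl' ->] /=.
by rewrite (IH _ _ hl').
Qed.

Lemma eq_sweedler n h g g' :
  (forall l, size l = n.+1 -> g l = g' l) -> sweedler n h g = sweedler n h g'.
Proof. by move=> e; apply: eq_big_seq => l /size_coprod_iter; apply: e. Qed.

Lemma multilinear_cons n g x : multilinear n.+1 g -> multilinear n (fun l => g (x :: l)).
Proof. by move=> hg pre post hs; apply: (hg (x :: pre) post); rewrite /= addSn hs. Qed.

Lemma multilinear_head n g l : multilinear n g -> size l = n -> linear (fun x => g (x :: l)).
Proof. by move=> hg hl; apply: (hg [::] l). Qed.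

Lemma set_nth_multilinear n g :
  (forall l, size l = n.+1 -> forall i, (i < n.+1)%N -> linear (fun x => g (set_nth 0 l i x))) ->
  multilinear n g.
Proof.
have set_nth_mid pre post x : set_nth 0 (pre ++ 0 :: post) (size pre) x = pre ++ x :: post.
  by elim: pre => [|y pre IH] //=; rewrite IH.
move=> hg pre post hs a x y.
have := hg (pre ++ 0 :: post) _ (size pre) _ a x y.
rewrite !set_nth_mid; apply; first by rewrite size_cat /= addnS hs.
by rewrite -hs ltnS leq_addr.
Qed.

Lemma sweedler_linear n g : multilinear n g -> linear (fun h => sweedler n h g).
Proof.
elim: n g => [|n IH] g hg a x y; first by rewrite !sweedler0; apply: (hg [::] [::]).
rewrite !sweedlerS.
suff hb : bilinear_map (fun x y => sweedler n y (fun l => g (x :: l))).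
  exact: (coprod_linear hb).
apply: lin_bilinear_map => [y' | x']; last exact: IH (multilinear_cons _ hg).
apply: linear_bigsum => l /size_coprod_iter hl; exact: multilinear_head hg _.
Qed.

(* Coassociativity in iterated form: coproducting the [i]-th factor once more. *)
Lemma sweedler_coassoc n i g : (i <= n)%N -> multilinear n.+1 g ->
  forall h, sweedler n h (fun l => \sum_(p <- D (nth 0 l i))
                              g (take i l ++ p.1 :: p.2 :: drop i.+1 l))
          = sweedler n.+1 h g.
Proof.
elim: n i g => [|n IH] [|i] g //= hi hg h.
- by rewrite sweedler0 sweedler1.
- pose T x y z := sweedler n z (fun l => g (x :: y :: l)).
  have hT : trilinear_map T.
    apply: lin_trilinear_map => [y z|x z|x y].
    + apply: linear_bigsum => l /size_coprod_iter hl; apply: (hg [::] (y :: l)).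
      by rewrite /= hl.
    + apply: linear_bigsum => l /size_coprod_iter hl; apply: (hg [:: x] l).
      by rewrite /= hl.
    + exact: sweedler_linear (multilinear_cons _ (multilinear_cons _ hg)).
  rewrite sweedlerS [RHS]sweedlerS.
  transitivity (\sum_(p <- D h) \sum_(q <- D p.1) T q.1 q.2 p.2).
    apply: eq_bigr => p _; rewrite /T /sweedler exchange_big; apply: eq_bigr => l _.
    by apply: eq_bigr => q _; rewrite /= drop0.
  by rewrite D_coassoc //; apply: eq_bigr => p _; rewrite sweedlerS.
- rewrite sweedlerS [RHS]sweedlerS; apply: eq_bigr => p _ /=.
  exact: IH (multilinear_cons _ hg) p.2.
Qed.

Lemma sweedler2_left h g : multilinear 2 g ->
  sweedler 2 h g = \sum_(p <- D h) \sum_(q <- D p.1) g [:: q.1; q.2; p.2].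
Proof. by move=> hg; rewrite -(sweedler_coassoc (i:=0)) // sweedler1. Qed.

Lemma sweedler_cat n m g : multilinear (n + m) g ->
  forall h, sweedler n h (fun l => sweedler m (nth 0 l n) (fun k => g (take n l ++ k)))
          = sweedler (n + m) h g.
Proof.
elim: n g => [|n IH] g hg h; first by rewrite sweedler0 /= add0n.
rewrite sweedlerS addSn sweedlerS; apply: eq_bigr => p _ /=.
exact: IH (multilinear_cons _ hg) p.2.
Qed.

Hypothesis D_cocomm : forall h, teq (D h) [seq (p.2, p.1) | p <- D h].

Lemma coprod_cocomm (B : H -> H -> U) : bilinear_map B -> forall h,
  \sum_(p <- D h) B p.1 p.2 = \sum_(p <- D h) B p.2 p.1.
Proof. by move=> hb h; have := D_cocomm h hb; rewrite /tsum big_map. Qed.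

(* Cocommutativity in iterated form: [g'] is [g] with factors [i] and [i.+1] swapped. *)
Lemma sweedler_cocomm n i g g' : (i < n)%N -> multilinear n g -> multilinear n g' ->
  (forall pre x y post, size pre = i -> (size pre + size post).+1 = n ->
     g' (pre ++ x :: y :: post) = g (pre ++ y :: x :: post)) ->
  forall h, sweedler n h g = sweedler n h g'.
Proof.
case: n => [//|m] hi hg hg' e h.
rewrite -(sweedler_coassoc (i:=i) _ hg) // -(sweedler_coassoc (i:=i) _ hg') //.
apply: eq_sweedler => l hl.
have hs1 : size (take i l) = i by rewrite size_take hl hi.
have hs2 : (size (take i l) + size (drop i.+1 l)).+1 = m.+1.
  by rewrite hs1 size_drop hl; lia.
pose B x y := g (take i l ++ x :: y :: drop i.+1 l).
have hb : bilinear_map B.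
  apply: lin_bilinear_map => [y|x].
  - by apply: (hg (take i l) (y :: drop i.+1 l)); rewrite /= -hs2; lia.
  - move=> a u v; have := hg (rcons (take i l) x) (drop i.+1 l).
    by rewrite size_rcons => /(_ hs2 a u v); rewrite !cat_rcons.
by rewrite (coprod_cocomm hb); apply: eq_bigr => p _; rewrite /B e.
Qed.

End Sweedler.

Section LRSmash.
Variables (K : fieldType) (H A : algType K) (D : H -> seq (H * H)) (eps : H -> K)
  (S : H -> H) (la : H -> A -> A) (ra : A -> H -> A).
Hypothesis hH : hopf_algebra D eps S.
Hypothesis hC : cocommutative D.
Hypothesis hB : bimodule_algebra D eps la ra.

Let D_linear := hopf_D_linear hH.
Let D_coassoc := hopf_coassoc hH.
Let S_linear : linear S := hopf_S_linear hH.
Let la_bil := bma_la_bilinear hB.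
Let ra_bil := bma_ra_bilinear hB.
Local Notation coassoc_at := (sweedler_coassoc D_linear D_coassoc).
Local Notation coassoc2 := (sweedler2_left D_linear D_coassoc).
Local Notation cocomm_at := (sweedler_cocomm D_linear D_coassoc hC).

Lemma epsD x y : eps (x + y) = eps x + eps y.
Proof. by have := hopf_eps_linear hH 1 x y; rewrite scale1r mul1r. Qed.

Lemma epsZ a x : eps (a *: x) = a * eps x.
Proof.
have eps0 : eps 0 = 0 by apply: (@addrI _ (eps 0)); rewrite -epsD !addr0.
by rewrite -[a *: x]addr0 (hopf_eps_linear hH) eps0 addr0.
Qed.

Lemma coprod_mul (U : lmodType K) (B : H -> H -> U) : bilinear_map B -> forall g h,
  \sum_(p <- D (g * h)) B p.1 p.2
  = \sum_(p <- D g) \sum_(q <- D h) B (p.1 * q.1) (p.2 * q.2).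
Proof.
move=> hb g h; have := hopf_D_mul hH g h hb; rewrite /tsum => ->.
by rewrite big_allpairs_dep.
Qed.

Lemma coprod_one (U : lmodType K) (B : H -> H -> U) : bilinear_map B ->
  \sum_(p <- D 1) B p.1 p.2 = B 1 1.
Proof. by move=> hb; have := hopf_D_one hH hb; rewrite /tsum big_seq1. Qed.

Lemma antipode1 : S 1 = 1.
Proof.
have hb : bilinear_map (fun x y : H => S x * y).
  by apply: lin_bilinear_map => [y|x] a u w;
    rewrite ?(linD S_linear, linZ S_linear, mulrDl, mulrDr, mulrZl, mulrZr).
have := hopf_antipode_l hH 1.
by rewrite (coprod_one hb) (hopf_eps_one hH) scale1r mulr1.
Qed.

Definition smash_to_lr (s : seq (A * H)) : seq (A * H) :=
  flatten [seq [seq (ra x.1 p.1, p.2) | p <- D x.2] | x <- s].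

Definition lr_to_smash (s : seq (A * H)) : seq (A * H) :=
  flatten [seq [seq (ra x.1 (S p.1), p.2) | p <- D x.2] | x <- s].

Local Notation act := (smash_act D S la ra).

Section Evaluation.
Variables (U : lmodType K) (f : A -> H -> U).
Hypothesis hf : bilinear_map f.

Ltac lin_simp := rewrite ?(mulrDl, mulrDr, mulrZl, mulrZr, scalerDl, scalerDr, scalerM,
  bilinDl ra_bil, bilinZl ra_bil, bilinDr ra_bil, bilinZr ra_bil,
  bilinDl la_bil, bilinZl la_bil, bilinDr la_bil, bilinZr la_bil,
  linD S_linear, linZ S_linear, epsD, epsZ,
  bilinDl hf, bilinZl hf, bilinDr hf, bilinZr hf).
Ltac sweedler_lin := rewrite /sweedler ?scaler_sumr -?big_split; apply: eq_bigr => ? _ /=.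
Ltac multilinear_tac := apply: set_nth_multilinear;
  let l := fresh "l" in let hl := fresh "hl" in let i := fresh "i" in let hi := fresh "hi" in
  intros l hl i hi; repeat (let x := fresh "x" in case: l hl => [|x l] //= hl);
  case: i hi => [|[|[|[|[|?]]]]] //= _ ? ? ?; repeat sweedler_lin; lin_simp.

Lemma tsum_smash_to_lr s :
  tsum f (smash_to_lr s) = \sum_(x <- s) \sum_(p <- D x.2) f (ra x.1 p.1) p.2.
Proof.
by rewrite /tsum /smash_to_lr big_flatten big_map; apply: eq_bigr => x _; rewrite big_map.
Qed.

Lemma tsum_lr_to_smash s :
  tsum f (lr_to_smash s) = \sum_(x <- s) \sum_(p <- D x.2) f (ra x.1 (S p.1)) p.2.
Proof.
by rewrite /tsum /lr_to_smash big_flatten big_map; apply: eq_bigr => x _; rewrite big_map.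
Qed.

Lemma tsum_lr_mul s t : tsum f (lr_mul D la ra s t) = \sum_(x <- s) \sum_(y <- t)
   \sum_(p <- D x.2) \sum_(q <- D y.2) f (ra x.1 q.2 * la p.1 y.1) (p.2 * q.1).
Proof.
rewrite /tsum /lr_mul big_flatten big_map; apply: eq_bigr => x _.
by rewrite big_flatten big_map; apply: eq_bigr => y _; rewrite big_allpairs_dep.
Qed.

Lemma ra_coprod_bilinear (T : H -> H) : linear T ->
  bilinear_map (fun a h => \sum_(p <- D h) f (ra a (T p.1)) p.2).
Proof.
move=> hT; apply: lin_bilinear_map => [h|a].
  by move=> c u w; repeat sweedler_lin; lin_simp.
apply: (coprod_linear D_linear (B := fun x y => f (ra a (T x)) y)).
by apply: lin_bilinear_map => [y|x] c u w; rewrite ?(linD hT, linZ hT); lin_simp.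
Qed.

(* The common core of both inverse laws: [T] is [S x * y] or [x * S y]. *)
Lemma ra_antipode_cancel (T : H -> H -> H) : bilinear_map T ->
  (forall h, \sum_(p <- D h) T p.1 p.2 = eps h *: 1) -> forall x h,
  \sum_(q <- D h) \sum_(p <- D q.2) f (ra x (T q.1 p.1)) p.2 = f x h.
Proof.
move=> hT hanti x h.
have hM : multilinear 2 (fun l => f (ra x (T l`_0 l`_1)) l`_2).
  by multilinear_tac; rewrite ?(bilinDl hT, bilinZl hT, bilinDr hT, bilinZr hT); lin_simp.
transitivity (sweedler D 2 h (fun l => f (ra x (T l`_0 l`_1)) l`_2)).
  by rewrite sweedler2.
rewrite (coassoc2 _ hM).
transitivity (\sum_(p <- D h) f (ra x (eps p.1 *: 1)) p.2).
  by apply: eq_bigr => p _; rewrite /= -hanti (bilin_sumr ra_bil) (bilin_suml hf).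
under eq_bigr => p _ do rewrite (bilinZr ra_bil) (bma_ra_one hB) (bilinZl hf) -(bilinZr hf).
by rewrite -(bilin_sumr hf) (hopf_counit_l hH).
Qed.

Lemma smash_to_lrK s : tsum f (smash_to_lr (lr_to_smash s)) = tsum f s.
Proof.
have hT : bilinear_map (fun x y => S x * y).
  by apply: lin_bilinear_map => [y|x] a u w; lin_simp.
rewrite tsum_smash_to_lr /lr_to_smash big_flatten big_map /tsum; apply: eq_bigr => x _.
rewrite big_map -(ra_antipode_cancel hT (hopf_antipode_l hH)).
by apply: eq_bigr => q _; apply: eq_bigr => p _; rewrite (bma_ra_mul hB).
Qed.

Lemma lr_to_smashK s : tsum f (lr_to_smash (smash_to_lr s)) = tsum f s.
Proof.
have hT : bilinear_map (fun x y => x * S y).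
  by apply: lin_bilinear_map => [y|x] a u w; lin_simp.
rewrite tsum_lr_to_smash /smash_to_lr big_flatten big_map /tsum; apply: eq_bigr => x _.
rewrite big_map -(ra_antipode_cancel hT (hopf_antipode_r hH)).
by apply: eq_bigr => q _; apply: eq_bigr => p _; rewrite (bma_ra_mul hB).
Qed.

Lemma tsum_lr_mul_teql s s' t : teq s s' ->
  tsum f (lr_mul D la ra s t) = tsum f (lr_mul D la ra s' t).
Proof.
pose L a h := \sum_(y <- t) \sum_(p <- D h) \sum_(q <- D y.2)
  f (ra a q.2 * la p.1 y.1) (p.2 * q.1).
suff hL : bilinear_map L by move=> hs; rewrite !tsum_lr_mul; exact: hs _ _ hL.
apply: lin_bilinear_map => [h|a]; first by move=> c u w; repeat sweedler_lin; lin_simp.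
apply: linear_bigsum => y _.
apply: (coprod_linear D_linear
  (B := fun x z => \sum_(q <- D y.2) f (ra a q.2 * la x y.1) (z * q.1))).
by apply: lin_bilinear_map => [z|x] c u w; repeat sweedler_lin; lin_simp.
Qed.

Lemma tsum_lr_mul_teqr s t t' : teq t t' ->
  tsum f (lr_mul D la ra s t) = tsum f (lr_mul D la ra s t').
Proof.
pose L b k := \sum_(x <- s) \sum_(p <- D x.2) \sum_(q <- D k)
  f (ra x.1 q.2 * la p.1 b) (p.2 * q.1).
suff hL : bilinear_map L.
  by move=> ht; rewrite !tsum_lr_mul exchange_big [RHS]exchange_big; exact: ht _ _ hL.
apply: lin_bilinear_map => [k|b]; first by move=> c u w; repeat sweedler_lin; lin_simp.
apply: linear_bigsum => x _; apply: linear_bigsum => p _.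
apply: (coprod_linear D_linear (B := fun u w => f (ra x.1 w * la p.1 b) (p.2 * u))).
by apply: lin_bilinear_map => [z|z] c u w; lin_simp.
Qed.

(* f at (phi . h_2 h'_1)((h_1 . psi) . h'_2) (x) h_3 h'_3 *)
Definition mul_nf phi psi h h' := sweedler D 2 h (fun l => sweedler D 2 h' (fun m =>
  f (ra phi (l`_1 * m`_0) * ra (la l`_0 psi) m`_1) (l`_2 * m`_2))).

Definition smash_term phi psi (l m : seq H) :=
  f (ra phi (l`_2 * m`_0) * ra (la l`_0 psi) (S l`_1 * (l`_3 * m`_1))) (l`_4 * m`_2).

Lemma smash_term_multilinear phi psi h' :
  multilinear 4 (fun l => sweedler D 2 h' (smash_term phi psi l)).
Proof. by rewrite /smash_term; multilinear_tac. Qed.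

Lemma smash_mul_expand phi psi h h' :
  \sum_(p <- D h) \sum_(r <- D (p.2 * h')) f (ra (phi * act p.1 psi) r.1) r.2 =
  \sum_(p <- D h) \sum_(q <- D p.1) \sum_(c <- D p.2) \sum_(e <- D c.1)
     \sum_(d <- D h') \sum_(g <- D d.1)
     smash_term phi psi [:: q.1; q.2; e.1; e.2; c.2] [:: g.1; g.2; d.2].
Proof.
apply: eq_bigr => p _; rewrite /smash_act.
under eq_bigr => r _ do rewrite mulr_sumr (bilin_suml ra_bil) (bilin_suml hf).
rewrite exchange_big; apply: eq_bigr => q _ /=.
set Y := ra (la q.1 psi) (S q.2).
have hb1 : bilinear_map (fun x y => f (ra (phi * Y) x) y).
  by apply: lin_bilinear_map => [y|x] a u v; lin_simp.
rewrite (coprod_mul hb1) /=; apply: eq_bigr => c _.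
have hb2 : bilinear_map (fun x y => ra phi x * ra Y y).
  by apply: lin_bilinear_map => [y|x] a u v; lin_simp.
under eq_bigr => d _ do rewrite (bma_ra_mulA hB) (coprod_mul hb2) (bilin_suml hf).
under eq_bigr => d _ do under eq_bigr => e _ do rewrite (bilin_suml hf).
rewrite exchange_big; apply: eq_bigr => e _; apply: eq_bigr => d _; apply: eq_bigr => g _.
by rewrite /smash_term /Y /= -(bma_ra_mul hB).
Qed.

Lemma smash_term_sweedler phi psi h h' :
  \sum_(p <- D h) \sum_(q <- D p.1) \sum_(c <- D p.2) \sum_(e <- D c.1)
     \sum_(d <- D h') \sum_(g <- D d.1)
     smash_term phi psi [:: q.1; q.2; e.1; e.2; c.2] [:: g.1; g.2; d.2] =
  sweedler D 4 h (fun l => sweedler D 2 h' (smash_term phi psi l)).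
Proof.
have hM1 l : multilinear 2 (smash_term phi psi l) by rewrite /smash_term; multilinear_tac.
have hM2 x y : multilinear 2 (fun k => sweedler D 2 h' (smash_term phi psi ([:: x; y] ++ k))).
  by rewrite /smash_term; multilinear_tac.
have hM3 : multilinear 2 (fun l => sweedler D 2 l`_2
             (fun k => sweedler D 2 h' (smash_term phi psi (take 2 l ++ k)))).
  apply: set_nth_multilinear => l hl i hi.
  case: l hl => [|x0 [|x1 [|x2 [|? ?]]]] //= _; case: i hi => [|[|[|?]]] //= _.
  1-2: by move=> a u v; rewrite /smash_term; repeat sweedler_lin; lin_simp.
  exact: sweedler_linear (hM2 _ _).
rewrite -(sweedler_cat D (n:=2) (m:=2) (smash_term_multilinear phi psi h')) /=.
rewrite (coassoc2 _ hM3); apply: eq_bigr => p _.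
apply: eq_bigr => q _ /=; rewrite (coassoc2 _ (hM2 _ _)).
apply: eq_bigr => c _; apply: eq_bigr => e _ /=.
by rewrite (coassoc2 _ (hM1 _)).
Qed.

Lemma smash_term_contract phi psi h h' :
  sweedler D 4 h (fun l => sweedler D 2 h' (smash_term phi psi l)) = mul_nf phi psi h h'.
Proof.
pose E l m := f (ra phi (l`_3 * m`_0) * ra (la l`_0 psi) (S l`_1 * (l`_2 * m`_1)))
                (l`_4 * m`_2).
pose Q l := eps l`_1 *: sweedler D 2 h' (fun m =>
              f (ra phi (l`_2 * m`_0) * ra (la l`_0 psi) m`_1) (l`_3 * m`_2)).
have hE : multilinear 4 (fun l => sweedler D 2 h' (E l)) by rewrite /E; multilinear_tac.
have hQ : multilinear 3 Q.
  by rewrite /Q; multilinear_tac; try by rewrite !scalerA mulrC.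
have cocomm_step : sweedler D 4 h (fun l => sweedler D 2 h' (smash_term phi psi l))
                 = sweedler D 4 h (fun l => sweedler D 2 h' (E l)).
  apply: (cocomm_at (i:=2)) => //.
    exact: smash_term_multilinear.
  by move=> pre x y post hs hs2; case: pre hs hs2 => [|? [|? [|? ?]]].
have antipode_step : sweedler D 4 h (fun l => sweedler D 2 h' (E l)) = sweedler D 3 h Q.
  rewrite -(coassoc_at (i:=1) _ hE) //.
  apply: eq_sweedler => l hl.
  case: l hl => [|x0 [|x1 [|x2 [|x3 [|? ?]]]]] //= _.
  pose L y := sweedler D 2 h' (fun m =>
    f (ra phi (x2 * m`_0) * ra (la x0 psi) (y * m`_1)) (x3 * m`_2)).
  have hL : linear L by move=> a u v; rewrite /L; repeat sweedler_lin; lin_simp.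
  transitivity (\sum_(p <- D x1) L (S p.1 * p.2)).
    by apply: eq_bigr => p _; rewrite /L /E /sweedler; apply: eq_bigr => m _ /=; rewrite mulrA.
  rewrite -(lin_sum _ _ hL) (hopf_antipode_l hH) (linZ hL) /Q /L /sweedler.
  by congr (_ *: _); apply: eq_bigr => m _ /=; rewrite mul1r.
rewrite cocomm_step antipode_step -(coassoc_at (i:=0) _ hQ) //.
apply: eq_sweedler => l hl; case: l hl => [|x0 [|x1 [|x2 [|? ?]]]] //= _.
pose W y := sweedler D 2 h' (fun m =>
  f (ra phi (x1 * m`_0) * ra (la y psi) m`_1) (x2 * m`_2)).
have hW : linear W by move=> a u v; rewrite /W; repeat sweedler_lin; lin_simp.
transitivity (\sum_(p <- D x0) W (eps p.2 *: p.1)).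
  by apply: eq_bigr => p _; rewrite (linZ hW).
by rewrite -(lin_sum _ _ hW) (hopf_counit_r hH).
Qed.

Lemma smash_mul_nf phi psi h h' :
  \sum_(p <- D h) \sum_(r <- D (p.2 * h')) f (ra (phi * act p.1 psi) r.1) r.2
  = mul_nf phi psi h h'.
Proof. by rewrite smash_mul_expand smash_term_sweedler smash_term_contract. Qed.

Lemma lr_mul_nf phi psi h h' :
  \sum_(a <- D h) \sum_(b <- D h') \sum_(c <- D a.2) \sum_(d <- D b.2)
    f (ra (ra phi a.1) d.2 * la c.1 (ra psi b.1)) (c.2 * d.1) = mul_nf phi psi h h'.
Proof.
pose R0 l m := f (ra phi (l`_0 * m`_2) * ra (la l`_1 psi) m`_0) (l`_2 * m`_1).
pose R1 l m := f (ra phi (l`_1 * m`_2) * ra (la l`_0 psi) m`_0) (l`_2 * m`_1).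
pose R2 l m := f (ra phi (l`_1 * m`_1) * ra (la l`_0 psi) m`_0) (l`_2 * m`_2).
pose R3 l m := f (ra phi (l`_1 * m`_0) * ra (la l`_0 psi) m`_1) (l`_2 * m`_2).
have hR0 : multilinear 2 (fun l => sweedler D 2 h' (R0 l)) by rewrite /R0; multilinear_tac.
have hR1 : multilinear 2 (fun l => sweedler D 2 h' (R1 l)) by rewrite /R1; multilinear_tac.
have hR1m l : multilinear 2 (R1 l) by rewrite /R1; multilinear_tac.
have hR2m l : multilinear 2 (R2 l) by rewrite /R2; multilinear_tac.
have hR3m l : multilinear 2 (R3 l) by rewrite /R3; multilinear_tac.
transitivity (sweedler D 2 h (fun l => sweedler D 2 h' (R0 l))).
  rewrite sweedler2; apply: eq_bigr => a _; rewrite exchange_big; apply: eq_bigr => c _.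
  rewrite sweedler2; apply: eq_bigr => b _; apply: eq_bigr => d _.
  by rewrite /R0 /= (bma_ra_mul hB) (bma_lr hB).
rewrite (cocomm_at (i:=0) (g' := fun l => sweedler D 2 h' (R1 l))) //; last by case.
apply: eq_sweedler => l _.
rewrite (cocomm_at (i:=1) (g' := R2 l)) //; last by move=> [|? [|? ?]].
by rewrite (cocomm_at (i:=0) (g' := R3 l)) //; case.
Qed.

Lemma smash_to_lr_mul u v :
  tsum f (smash_to_lr (smash_mul D act u v))
  = tsum f (lr_mul D la ra (smash_to_lr u) (smash_to_lr v)).
Proof.
rewrite tsum_smash_to_lr tsum_lr_mul /smash_mul /smash_to_lr.
rewrite big_flatten big_map [RHS]big_flatten [RHS]big_map; apply: eq_bigr => x _.
transitivity (\sum_(y <- v) mul_nf x.1 y.1 x.2 y.2).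
  rewrite big_flatten big_map; apply: eq_bigr => y _.
  by rewrite big_map; apply: smash_mul_nf.
rewrite [RHS]big_map [RHS]exchange_big [RHS]big_flatten [RHS]big_map.
apply: eq_bigr => y _; rewrite [RHS]big_map [RHS]exchange_big.
exact: esym (lr_mul_nf _ _ _ _).
Qed.

End Evaluation.

Lemma smash_to_lr_teq s t : teq s t -> teq (smash_to_lr s) (smash_to_lr t).
Proof.
move=> hst U f hf; rewrite !tsum_smash_to_lr.
exact: hst _ _ (ra_coprod_bilinear hf (T := id) (fun _ _ _ => erefl)).
Qed.

Lemma lr_to_smash_teq s t : teq s t -> teq (lr_to_smash s) (lr_to_smash t).
Proof.
move=> hst U f hf; rewrite !tsum_lr_to_smash.
exact: hst _ _ (ra_coprod_bilinear hf S_linear).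
Qed.

Lemma lr_to_smash_cat s t : teq (lr_to_smash (s ++ t)) (lr_to_smash s ++ lr_to_smash t).
Proof. by move=> U f hf; rewrite /lr_to_smash map_cat flatten_cat. Qed.

Lemma lr_to_smash_scale a s : teq (lr_to_smash (tscale a s)) (tscale a (lr_to_smash s)).
Proof.
move=> U f hf; rewrite tsum_lr_to_smash /tscale /tsum !big_map.
rewrite /lr_to_smash big_flatten big_map; apply: eq_bigr => x _.
by rewrite big_map; apply: eq_bigr => p _ /=; rewrite (bilinZl ra_bil).
Qed.

Lemma lr_to_smash_one : teq (lr_to_smash [:: (1, 1)]) [:: (1, 1)].
Proof.
move=> U f hf; rewrite tsum_lr_to_smash /tsum !big_seq1 /=.
have hb : bilinear_map (fun x y => f (ra 1 (S x)) y).
  apply: lin_bilinear_map => [y|x] a u w;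
    by rewrite ?(linD S_linear, linZ S_linear, bilinDr ra_bil, bilinZr ra_bil,
                 bilinDl hf, bilinZl hf, bilinDr hf, bilinZr hf).
by rewrite (coprod_one hb) antipode1 (bma_ra_one hB).
Qed.

Lemma lr_to_smash_mul s t :
  teq (lr_to_smash (lr_mul D la ra s t)) (smash_mul D act (lr_to_smash s) (lr_to_smash t)).
Proof.
set X := smash_mul D _ _ _.
suff e : teq (lr_mul D la ra s t) (smash_to_lr X).
  by move=> U f hf; rewrite (lr_to_smash_teq e hf) lr_to_smashK.
move=> U f hf; rewrite /X smash_to_lr_mul //.
rewrite (@tsum_lr_mul_teql _ _ hf s (smash_to_lr (lr_to_smash s))); last first.
  by move=> ? ? ?; rewrite smash_to_lrK.
by apply: tsum_lr_mul_teqr => // ? ? ?; rewrite smash_to_lrK.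
Qed.

End LRSmash.

Theorem proposition3p1 (K : fieldType) (H A : algType K)
  (D : H -> seq (H * H)) (eps : H -> K) (S : H -> H)
  (la : H -> A -> A) (ra : A -> H -> A) :
  hopf_algebra D eps S -> cocommutative D -> bimodule_algebra D eps la ra ->
  tensor_alg_iso (lr_mul D la ra) (smash_mul D (smash_act D S la ra)).
Proof.
move=> hH hC hB.
exists (lr_to_smash D S ra); split; [|split; [|split; [|split; [|split; [|split]]]]].
- exact: lr_to_smash_teq hH hB.
- exact: lr_to_smash_cat.
- exact: lr_to_smash_scale hB.
- exact: lr_to_smash_mul hH hC hB.
- exact: lr_to_smash_one hH hB.
- move=> s t hst U f hf; rewrite -(smash_to_lrK hH hB hf s) -(smash_to_lrK hH hB hf t).
  exact: (smash_to_lr_teq hH hB hst).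
- by move=> t; exists (smash_to_lr D ra t) => U f hf; exact: (lr_to_smashK hH hB hf).
Qed.
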